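(* Let $M$ be a model of $\mathrm{AA}_0$. The following are equivalent: (i) $(M,\le)$ is linearly ordered; (ii) there is no $x\in M$ with $0<x<1$; (iii) for every $x\in M$, either $x=0$ or $|x|=1$; (iv) $M$ is a model of $\mathrm{PA}^-$.
   Context: Structures are complete metric spaces $(M,d)$ of diameter at most $1$ in the language $L=\{+,\cdot,\wedge,\vee,0,1\}$, all operations $1$-Lipschitz (sum metric on products), $d$ the only relation symbol; conditions are written with affine formulas (built from $1$ and $d(t_1,t_2)$ using $+$, scalar multiplication, $\sup$, $\inf$) and free variables are universally quantified. Notation: $|x|=d(x,0)$; $x\le y$ means $x\wedge y=x$; $x<y$ means $x\le y$ and $x\ne y$; $nx$ and $x^n$ are iterated sums/products. $\mathrm{AA}_0$ is the set of conditions: (A1) the identities of the nonnegative part of a lattice-ordered commutative ring with identity (commutative semiring axioms for $+,\cdot,0,1$, lattice axioms for $\wedge,\vee$, distributivity of $+$ and $\cdot$ over $\wedge,\vee$, and $0\le x$); (A2) $\inf_y d(x,(x\wedge y)+1)=1-|x|$ and $x\le x^2$; (A3) $d(x+z,y+z)=d(x,y)$; (A4) $d(y,z)\le d(xy,xz)+1-|x|$; (A5) $d(xy,xz)=d(x^ny,x^nz)\le d(y,z)$; (A6) $d(nx,ny)=d(x^n,y^n)=d(x,y)$ for $n\ge1$; (A7) $|x\wedge y|+|x\vee y|=|x|+|y|$; (A8) $|xy+z|=|(x\wedge y)+z|$; (A9) $|x+y+z|=|(x\vee y)+z|$; (A10) $\inf_t d((x\wedge y)+t,y)=0$. $\mathrm{PA}^-$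 is the first-order theory (models taken with the discrete metric) of nonnegative parts of lattice-ordered commutative rings with identity whose order is linear and discrete. *)

From HB Require Import structures.
From mathcomp Require Import all_boot all_order all_algebra.
From Stdlib Require Import Rdefinitions.
From mathcomp Require Import Rstruct.
Set Implicit Arguments. Unset Strict Implicit. Unset Printing Implicit Defensive.
Import Order.TTheory GRing.Theory Num.Theory.
Local Open Scope ring_scope.

Record LStruct := {
  car :> Type;
  dist : car -> car -> R;
  add : car -> car -> car;
  mul : car -> car -> car;
  meet : car -> car -> car;
  join : car -> car -> car;
  zeroL : car;
  oneL : car }.
Arguments add : clear implicits.
Arguments mul : clear implicits.
Arguments meet : clear implicits.
Arguments join : clear implicits.

Section Defs.
Variable M : LStruct.

Definition absv (x : M) : R := dist x (zeroL M).
Definition leM (x y : M) : Prop := meet M x y = x.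
Definition ltM (x y : M) : Prop := leM x y /\ x <> y.

(* iterated operation with k+1 copies of x:  rep op x k = x op (x op ... x).
   So n x (resp. x^n) for n >= 1 is  rep add x (n-1)  (resp. rep mul x (n-1)). *)
Fixpoint rep (op : M -> M -> M) (x : M) (k : nat) : M :=
  match k with O => x | S k' => op x (rep op x k') end.

Definition is_inf (f : M -> R) (v : R) : Prop :=
  (forall y, v <= f y) /\ (forall e : R, 0 < e -> exists y, f y < v + e).

Definition lipschitz2 (op : M -> M -> M) : Prop :=
  forall x y x' y', dist (op x y) (op x' y') <= dist x x' + dist y y'.

Definition metric_structure : Prop :=
  (forall x y : M, dist x y = 0 <-> x = y) /\
  (forall x y : M, dist x y = dist y x) /\
  (forall x y z : M, dist x z <= dist x y + dist y z) /\
  (forall x y : M, dist x y <= 1) /\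
  (forall u : nat -> M,
      (forall e : R, 0 < e -> exists N : nat, forall m n : nat, leq N m -> leq N n ->
           dist (u m) (u n) < e) ->
      exists l, forall e : R, 0 < e -> exists N : nat, forall n : nat, leq N n ->
           dist (u n) l < e) /\
  lipschitz2 (add M) /\ lipschitz2 (mul M) /\ lipschitz2 (meet M) /\
  lipschitz2 (join M).

Definition A1 : Prop :=
  (forall x y z, add M (add M x y) z = add M x (add M y z)) /\
  (forall x y, add M x y = add M y x) /\
  (forall x, add M x (zeroL M) = x) /\
  (forall x y z, mul M (mul M x y) z = mul M x (mul M y z)) /\
  (forall x y, mul M x y = mul M y x) /\
  (forall x, mul M x (oneL M) = x) /\
  (forall x, mul M x (zeroL M) = zeroL M) /\
  (forall x y z, mul M x (add M y z) = add M (mul M x y) (mul M x z)) /\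
  (forall x y z, meet M (meet M x y) z = meet M x (meet M y z)) /\
  (forall x y z, join M (join M x y) z = join M x (join M y z)) /\
  (forall x y, meet M x y = meet M y x) /\
  (forall x y, join M x y = join M y x) /\
  (forall x, meet M x x = x) /\
  (forall x, join M x x = x) /\
  (forall x y, meet M x (join M x y) = x) /\
  (forall x y, join M x (meet M x y) = x) /\
  (forall x y z, add M x (meet M y z) = meet M (add M x y) (add M x z)) /\
  (forall x y z, add M x (join M y z) = join M (add M x y) (add M x z)) /\
  (forall x y z, mul M x (meet M y z) = meet M (mul M x y) (mul M x z)) /\
  (forall x y z, mul M x (join M y z) = join M (mul M x y) (mul M x z)) /\
  (forall x, leM (zeroL M) x).

Definition AA0 : Prop :=
  A1 /\
  (* (A2) *)
  (forall x, is_inf (fun y => dist x (add M (meet M x y) (oneL M))) (1 - absv x)) /\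
  (forall x, leM x (mul M x x)) /\
  (* (A3) *)
  (forall x y z, dist (add M x z) (add M y z) = dist x y) /\
  (* (A4) *)
  (forall x y z, dist y z <= dist (mul M x y) (mul M x z) + 1 - absv x) /\
  (* (A5), n = k+1 >= 1 *)
  (forall x y z k, dist (mul M x y) (mul M x z)
                   = dist (mul M (rep (mul M) x k) y) (mul M (rep (mul M) x k) z)) /\
  (forall x y z k, dist (mul M (rep (mul M) x k) y) (mul M (rep (mul M) x k) z)
                   <= dist y z) /\
  (* (A6), n = k+1 >= 1 *)
  (forall x y k, dist (rep (add M) x k) (rep (add M) y k) = dist x y) /\
  (forall x y k, dist (rep (mul M) x k) (rep (mul M) y k) = dist x y) /\
  (* (A7) *)
  (forall x y, absv (meet M x y) + absv (join M x y) = absv x + absv y) /\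
  (* (A8) *)
  (forall x y z, absv (add M (mul M x y) z) = absv (add M (meet M x y) z)) /\
  (* (A9) *)
  (forall x y z, absv (add M (add M x y) z) = absv (add M (join M x y) z)) /\
  (* (A10) *)
  (forall x y, is_inf (fun t => dist (add M (meet M x y) t) y) 0).

Definition model_AA0 : Prop := metric_structure /\ AA0.

(* A linearly ordered commutative ring
   with 1 <> 0 is an integral domain with a total order compatible with
   + and *, i.e. a MathComp realDomainType; lattice ops are min/max. *)
Definition discrete_metric : Prop :=
  forall x y : M, x <> y -> dist x y = 1.

Definition nonneg_part_of_discrete_lin_ring : Prop :=
  exists (K : realDomainType) (f : M -> K),
    injective f /\
    (forall r : K, 0 <= r -> exists x, f x = r) /\
    (forall x, 0 <= f x) /\
    f (zeroL M) = 0 /\ f (oneL M) = 1 /\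
    (forall x y, f (add M x y) = f x + f y) /\
    (forall x y, f (mul M x y) = f x * f y) /\
    (forall x y, f (meet M x y) = Num.min (f x) (f y)) /\
    (forall x y, f (join M x y) = Num.max (f x) (f y)) /\
    (forall r : K, 0 < r -> 1 <= r).

Definition model_PAminus : Prop :=
  discrete_metric /\ nonneg_part_of_discrete_lin_ring.

End Defs.

(* Under (i), an element 0 < x < 1 would be idempotent, and approximating 1 by some x + t
   (A10) makes |x ⊓ t| = |x t| small, so by linearity |x| or d(x, 1) would be small.
   Under (ii), x ⊓ 1 is 0 or 1, which gives |x| = 0 by A8, resp. |x| = 1 by A2 and A10.
   Under (iii), A7 shows that s ⊓ t = 0 forces s = 0 or t = 0; applied to the approximate
   complements provided by A10, this makes the metric discrete, the differences of A10
   exact and the order linear.  M is then a cancellative, linearly ordered semiring with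
   subtraction and, by A4, without zero divisors: the nonnegative part of its ring of
   formal differences, whose order is discrete by (ii). *)

From HB Require Import structures.
From mathcomp Require Import all_boot all_order all_algebra.
From mathcomp Require Import Rstruct.
From mathcomp Require Import lra.
From Stdlib Require Import Ring Setoid.
From mathcomp.classical Require Import boolp.
(* Imported last, so that add, mul, meet and join denote the fields of LStruct. *)
Import Order.TTheory GRing.Theory Num.Theory.
Local Open Scope ring_scope.
Set Implicit Arguments. Unset Strict Implicit. Unset Printing Implicit Defensive.

(* A pair (a, b) stands for the formal difference a - b, normalised so that one side is
   0.  The proof arguments are unused: they index the type so that the ring and order
   instances, which need them, can be found by unification. *)
Definition diff_ring (M : LStruct) of model_AA0 M & (forall x : M, x = zeroL M \/ absv x = 1)
  := {p : M * M | p.1 = zeroL M \/ p.2 = zeroL M}.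

Section AA0Models.
Variable M : LStruct.
Hypothesis HM : model_AA0 M.
Implicit Types x y z t s u v : M.

Local Infix "⊕" := (add M) (at level 50, left associativity).
Local Infix "⊛" := (mul M) (at level 40, left associativity).
Local Infix "⊓" := (meet M) (at level 45, left associativity).
Local Infix "⊔" := (join M) (at level 45, left associativity).
Local Notation "'O'" := (zeroL M).
Local Notation "'I'" := (oneL M).

Ltac unpack_model := case: HM =>
  [[dist_eq0 [distC [triangle [diam [_ [_ [lip_mul [lip_meet _]]]]]]]]
   [[addLA [addLC [addL0 [mulLA [mulLC [mulL1 [mulL0 [mulLDr [meetLA [_ [meetLC [joinLC
     [meetLxx [_ [_ [meetLKU [addL_meetr [_ [mulL_meetr [_ le0L]]]]]]]]]]]]]]]]]]]]
    [A2inf [A2sqr [A3 [A4 [_ [_ [_ [_ [A7 [A8 [_ A10]]]]]]]]]]]]].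

Lemma dist_eq0 x y : dist x y = 0 <-> x = y. Proof. by unpack_model. Qed.
Lemma distC x y : dist x y = dist y x. Proof. by unpack_model. Qed.
Lemma dist_triangle x y z : dist x z <= dist x y + dist y z. Proof. by unpack_model. Qed.
Lemma dist_le1 x y : dist x y <= 1. Proof. by unpack_model. Qed.
Lemma lip_mul x y x' y' : dist (x ⊛ y) (x' ⊛ y') <= dist x x' + dist y y'.
Proof. by unpack_model. Qed.
Lemma lip_meet x y x' y' : dist (x ⊓ y) (x' ⊓ y') <= dist x x' + dist y y'.
Proof. by unpack_model. Qed.
Lemma addLA x y z : x ⊕ y ⊕ z = x ⊕ (y ⊕ z). Proof. by unpack_model. Qed.
Lemma addLC x y : x ⊕ y = y ⊕ x. Proof. by unpack_model. Qed.
Lemma addL0 x : x ⊕ O = x. Proof. by unpack_model. Qed.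
Lemma mulLA x y z : x ⊛ y ⊛ z = x ⊛ (y ⊛ z). Proof. by unpack_model. Qed.
Lemma mulLC x y : x ⊛ y = y ⊛ x. Proof. by unpack_model. Qed.
Lemma mulL1 x : x ⊛ I = x. Proof. by unpack_model. Qed.
Lemma mulL0 x : x ⊛ O = O. Proof. by unpack_model. Qed.
Lemma mulLDr x y z : x ⊛ (y ⊕ z) = x ⊛ y ⊕ x ⊛ z. Proof. by unpack_model. Qed.
Lemma meetLA x y z : x ⊓ y ⊓ z = x ⊓ (y ⊓ z). Proof. by unpack_model. Qed.
Lemma meetLC x y : x ⊓ y = y ⊓ x. Proof. by unpack_model. Qed.
Lemma joinLC x y : x ⊔ y = y ⊔ x. Proof. by unpack_model. Qed.
Lemma meetLxx x : x ⊓ x = x. Proof. by unpack_model. Qed.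
Lemma meetLKU x y : x ⊔ (x ⊓ y) = x. Proof. by unpack_model. Qed.
Lemma addL_meetr x y z : x ⊕ (y ⊓ z) = (x ⊕ y) ⊓ (x ⊕ z). Proof. by unpack_model. Qed.
Lemma mulL_meetr x y z : x ⊛ (y ⊓ z) = (x ⊛ y) ⊓ (x ⊛ z). Proof. by unpack_model. Qed.
Lemma le0L x : leM O x. Proof. by unpack_model. Qed.
Lemma one_sub_absv_le x y : 1 - absv x <= dist x ((x ⊓ y) ⊕ I).
Proof. by unpack_model; case: (A2inf x) => + _; apply. Qed.
Lemma leL_sqr x : leM x (x ⊛ x). Proof. by unpack_model. Qed.
Lemma dist_add2r x y z : dist (x ⊕ z) (y ⊕ z) = dist x y. Proof. by unpack_model. Qed.
Lemma dist_mul2l_lb x y z : dist y z <= dist (x ⊛ y) (x ⊛ z) + 1 - absv x.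
Proof. by unpack_model. Qed.
Lemma absv_meet_join x y : absv (x ⊓ y) + absv (x ⊔ y) = absv x + absv y.
Proof. by unpack_model. Qed.
Lemma absv_mul_meet x y : absv (x ⊛ y) = absv (x ⊓ y).
Proof. by unpack_model; have := A8 x y O; rewrite !addL0. Qed.
Lemma approx_meet_add x y e : 0 < e -> exists t, dist ((x ⊓ y) ⊕ t) y < e.
Proof. by unpack_model; case: (A10 x y) => _ /[apply]; rewrite add0r. Qed.

Lemma distxx x : dist x x = 0. Proof. exact/dist_eq0. Qed.
Lemma absv0 : absv O = 0. Proof. exact: distxx. Qed.
Lemma dist_ge0 x y : 0 <= dist x y.
Proof. by have := dist_triangle x y x; rewrite distxx (distC y x); lra. Qed.
Lemma dist_gt0 x y : x <> y -> 0 < dist x y.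
Proof.
by move=> xy; rewrite lt_def dist_ge0 andbT; apply/eqP => /dist_eq0.
Qed.

Lemma dist_quad x y x' y' : dist x y <= dist x x' + dist x' y' + dist y' y.
Proof. by have := dist_triangle x x' y; have := dist_triangle x' y' y; lra. Qed.

Lemma add0L x : O ⊕ x = x. Proof. by rewrite addLC addL0. Qed.
Lemma meet0L x : O ⊓ x = O. Proof. exact: le0L. Qed.
Lemma dist_add2l x y z : dist (z ⊕ x) (z ⊕ y) = dist x y.
Proof. by rewrite !(addLC z) dist_add2r. Qed.
Lemma dist_addr x t : dist x (x ⊕ t) = absv t.
Proof. by rewrite -{1}(addL0 x) dist_add2l distC. Qed.
Lemma addL_cancel x y z : x ⊕ z = y ⊕ z -> x = y.
Proof. by move=> e; apply/dist_eq0; rewrite -(dist_add2r x y z) e distxx. Qed.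

Lemma leL_anti x y : leM x y -> leM y x -> x = y.
Proof. by rewrite /leM => h1 h2; rewrite -h1 meetLC h2. Qed.
Lemma leL_addr x t : leM x (x ⊕ t).
Proof. by rewrite /leM -{1}(addL0 x) -addL_meetr meet0L addL0. Qed.
Lemma addL_eq0 x y : x ⊕ y = O -> x = O.
Proof. by move=> e; apply: leL_anti (le0L x); rewrite -e; apply: leL_addr. Qed.
Lemma mulL_idem x : leM x I -> x ⊛ x = x.
Proof.
move=> x1; apply: leL_anti (leL_sqr x).
by rewrite /leM -{3}(mulL1 x) -mulL_meetr x1.
Qed.

Lemma total_no_between01 :
  (forall x y, leM x y \/ leM y x) -> ~ (exists x, ltM O x /\ ltM x I).
Proof.
move=> total [x [[_ /nesym x_neq0] [x_le1 x_neq1]]].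
have small e : 0 < e -> absv x < e \/ dist x I < e + e.
  move=> e_gt0; have [t] := approx_meet_add x I e_gt0; rewrite x_le1 => xt1.
  have xt_small : absv (x ⊓ t) < e.
    rewrite -absv_mul_meet -(dist_addr (x ⊛ x)) -mulLDr mulL_idem // -{1}(mulL1 x).
    apply: le_lt_trans (lip_mul x I x (x ⊕ t)) _.
    by rewrite distxx add0r distC.
  have [xt|tx] := total x t; first by left; rewrite -xt.
  have := dist_triangle x (x ⊕ t) I; rewrite dist_addr.
  by rewrite meetLC tx in xt_small; right; lra.
have := dist_gt0 x_neq0; have := dist_gt0 x_neq1; rewrite -/(absv x).
move=> dx1 dx0; have [le_x|lt_x] := lerP (absv x) (dist x I / 2).
- by have := small _ dx0; lra.
- by have := small (dist x I / 2) ltac:(lra); lra.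
Qed.

Lemma no_between01_absv01 :
  ~ (exists x, ltM O x /\ ltM x I) -> forall x, x = O \/ absv x = 1.
Proof.
move=> no_between x.
have [xI0|xI1] : x ⊓ I = O \/ x ⊓ I = I.
  have [|xI_neq0] := pselect (x ⊓ I = O); first by left.
  have [|xI_neq1] := pselect (x ⊓ I = I); first by right.
  case: no_between; exists (x ⊓ I); split; split => //.
  - exact: le0L.
  - exact/nesym.
  - by rewrite /leM meetLA meetLxx.
- by left; apply/dist_eq0; rewrite -/(absv x) -(mulL1 x) absv_mul_meet xI0 absv0.
right; apply/eqP; rewrite eq_le dist_le1 -subr_le0; apply/ler_addgt0Pr => e e_gt0.
have [t] := approx_meet_add I x (ltac:(lra) : 0 < e / 2).
rewrite meetLC xI1 addLC => tx.
have meet_t : dist t (x ⊓ t) <= dist (t ⊕ I) x.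
  have tIt : (t ⊕ I) ⊓ t = t by rewrite meetLC; apply: leL_addr.
  by rewrite -{1}tIt; have := lip_meet (t ⊕ I) t x t; rewrite distxx addr0.
have := one_sub_absv_le x t.
have := dist_triangle x (t ⊕ I) ((x ⊓ t) ⊕ I); rewrite dist_add2r (distC x (t ⊕ I)).
lra.
Qed.

Lemma oneL_neq0 : I <> O.
Proof.
move=> I0; have := one_sub_absv_le O O.
by rewrite meet0L add0L I0 distxx absv0 subr0 ler10.
Qed.

Section Dichotomy.
Hypothesis absv01 : forall x, x = O \/ absv x = 1.

Lemma absv_lt1 x : absv x < 1 -> x = O.
Proof. by case: (absv01 x) => // ->; rewrite ltxx. Qed.

Lemma meetL_eq0 s t : s ⊓ t = O -> s = O \/ t = O.
Proof.
move=> st0; have := absv_meet_join s t; rewrite st0 absv0 add0r.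
have := dist_le1 (s ⊔ t) O; rewrite -/(absv (s ⊔ t)).
case: (absv01 s) => [s0|->]; first by left.
case: (absv01 t) => [t0|->]; first by right.
by move=> le1 sum; move: le1; rewrite sum gerDl ler10.
Qed.

Lemma absv_eq01 x : absv x = 0 \/ absv x = 1.
Proof. by case: (absv01 x) => [->|]; [left; apply: absv0 | right]. Qed.

Lemma dist_near01 u v e : 0 < e -> e <= 1 / 2 ->
  dist u v < e + e \/ 1 - (e + e) < dist u v.
Proof.
move=> e_gt0 e_le; set m := u ⊓ v.
have [t] := approx_meet_add u v e_gt0; rewrite -/m => vt.
have [s us] := approx_meet_add v u e_gt0; rewrite meetLC -/m in us.
(* (m + s) ⊓ (m + t) is 2e-close to u ⊓ v = m, so |s ⊓ t| < 1 *)
have st01 : dist (m ⊕ s) (m ⊕ t) = 0 \/ dist (m ⊕ s) (m ⊕ t) = 1.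
  rewrite dist_add2l; have [->|->] : s = O \/ t = O.
    apply/meetL_eq0/absv_lt1; rewrite /absv -(dist_add2l _ _ m) addL0 addL_meetr.
    by apply: le_lt_trans (lip_meet _ _ u v) _; rewrite -/m; lra.
  - by rewrite distC; apply: absv_eq01.
  - exact: absv_eq01.
have := dist_quad u v (m ⊕ s) (m ⊕ t); have := dist_quad (m ⊕ s) (m ⊕ t) u v.
rewrite (distC u (m ⊕ s)) (distC v (m ⊕ t)); case: st01 => ->; lra.
Qed.

Lemma dist01 u v : dist u v = 0 \/ dist u v = 1.
Proof.
have := dist_ge0 u v; rewrite le_eqVlt => /orP[/eqP/esym|d_gt0]; first by left.
have := dist_le1 u v; rewrite le_eqVlt => /orP[/eqP|d_lt1]; first by right.
exfalso; set d := dist u v in d_gt0 d_lt1.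
have := @dist_near01 u v (d * (1 - d) / 2); rewrite -/d; nra.
Qed.

Lemma dist_discrete u v : u <> v -> dist u v = 1.
Proof. by move=> uv; case: (dist01 u v) => // /dist_eq0. Qed.

Lemma exists_meet_add x y : exists t, (x ⊓ y) ⊕ t = y.
Proof.
have [t xyt] := approx_meet_add x y ltr01; exists t.
by apply/dist_eq0; case: (dist01 (x ⊓ y ⊕ t) y) => // d1; rewrite d1 ltxx in xyt.
Qed.

Lemma leL_total x y : leM x y \/ leM y x.
Proof.
have [t yt] := exists_meet_add x y; have [s xs] := exists_meet_add y x.
rewrite meetLC in xs; set m := x ⊓ y in yt xs.
have /meetL_eq0 [s0|t0] : s ⊓ t = O.
  by apply: (@addL_cancel _ _ m); rewrite addLC addL_meetr add0L xs yt.
- by left; rewrite /leM -/m -xs s0 addL0.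
- by right; rewrite /leM meetLC -/m -yt t0 addL0.
Qed.

Lemma mulL_eq0 x y : x ⊛ y = O -> x = O \/ y = O.
Proof.
move=> xy0; case: (absv01 x) => [|x1]; first by left.
right; apply/dist_eq0/eqP; rewrite eq_le dist_ge0 andbT.
by have := dist_mul2l_lb x y O; rewrite xy0 mulL0 distxx x1 add0r subrr.
Qed.

Definition subL y x : M :=
  if pselect (exists t, x ⊕ t = y) is left ex then sval (cid ex) else O.

Lemma addL_subK x y : leM x y -> x ⊕ subL y x = y.
Proof.
rewrite /subL => xy; case: pselect => [ex|[]]; first exact: svalP (cid ex).
by have [t xyt] := exists_meet_add x y; exists t; rewrite -{1}xy.
Qed.

Implicit Types p q r : (M * M)%type.

Definition normal_pair p := p.1 = O \/ p.2 = O.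
Definition eqvp p q := p.1 ⊕ q.2 = p.2 ⊕ q.1.
Definition normp p : M * M :=
  if pselect (leM p.2 p.1) then (subL p.1 p.2, O) else (O, subL p.2 p.1).
Definition addp p q := (p.1 ⊕ q.1, p.2 ⊕ q.2).
Definition mulp p q := (p.1 ⊛ q.1 ⊕ p.2 ⊛ q.2, p.1 ⊛ q.2 ⊕ p.2 ⊛ q.1).
Definition swapp p := (p.2, p.1).

Lemma L_semiring : semi_ring_theory O I (add M) (mul M) eq.
Proof.
constructor=> [x|x y|x y z|x|x|x y|x y z|x y z].
- exact: add0L.
- exact: addLC.
- by rewrite addLA.
- by rewrite mulLC mulL1.
- by rewrite mulLC mulL0.
- exact: mulLC.
- by rewrite mulLA.
- by rewrite mulLC mulLDr !(mulLC z).
Qed.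
Add Ring L_ring : L_semiring.

Lemma eqvp_refl p : eqvp p p. Proof. exact: addLC. Qed.
Lemma eqvp_sym p q : eqvp p q -> eqvp q p.
Proof. by rewrite /eqvp => e; rewrite addLC -e addLC. Qed.
Lemma eqvp_trans p q r : eqvp p q -> eqvp q r -> eqvp p r.
Proof.
rewrite /eqvp => pq qr; apply: (@addL_cancel _ _ (q.1 ⊕ q.2)).
by transitivity ((p.1 ⊕ q.2) ⊕ (q.1 ⊕ r.2)); [ring | rewrite pq qr; ring].
Qed.

Add Parametric Relation : (M * M)%type eqvp
  reflexivity proved by eqvp_refl
  symmetry proved by eqvp_sym
  transitivity proved by eqvp_trans as eqvp_rel.

Add Parametric Morphism : addp with signature eqvp ==> eqvp ==> eqvp as addp_mor.
Proof.
rewrite /eqvp /= => p p' pp' q q' qq'.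
by transitivity ((p.1 ⊕ p'.2) ⊕ (q.1 ⊕ q'.2)); [ring | rewrite pp' qq'; ring].
Qed.

Lemma mulpC p q : mulp p q = mulp q p.
Proof. by rewrite /mulp; congr pair; ring. Qed.

Lemma mulp_eqvl p p' q : eqvp p p' -> eqvp (mulp p q) (mulp p' q).
Proof.
rewrite /eqvp /mulp /= => pp'.
transitivity ((p.1 ⊕ p'.2) ⊛ q.1 ⊕ (p.2 ⊕ p'.1) ⊛ q.2); first ring.
transitivity ((p.2 ⊕ p'.1) ⊛ q.1 ⊕ (p.1 ⊕ p'.2) ⊛ q.2); last ring.
by rewrite pp'.
Qed.

Add Parametric Morphism : mulp with signature eqvp ==> eqvp ==> eqvp as mulp_mor.
Proof.
move=> p p' pp' q q' qq'; apply: eqvp_trans (mulp_eqvl q pp') _.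
by rewrite !(mulpC p'); apply: mulp_eqvl.
Qed.

Add Parametric Morphism : swapp with signature eqvp ==> eqvp as swapp_mor.
Proof. by move=> p q; apply: esym. Qed.

Lemma normp_normal p : normal_pair (normp p).
Proof. by rewrite /normp; case: pselect; [right | left]. Qed.

Lemma normp_eqvp p : eqvp (normp p) p.
Proof.
rewrite /normp /eqvp; case: pselect => [p21|/= p12] /=.
- by rewrite -[in RHS](addL_subK p21); ring.
- have {}p12 : leM p.1 p.2 by case: (leL_total p.1 p.2).
  by rewrite -[in LHS](addL_subK p12); ring.
Qed.

Lemma normal_eqvp_eq p q : normal_pair p -> normal_pair q -> eqvp p q -> p = q.
Proof.
case: p q => [a b] [c d]; rewrite /normal_pair /eqvp /= => -[]-> -[]->;
  rewrite ?add0L ?addL0.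
- by move=> ->.
- by move=> /esym bc; rewrite (addL_eq0 bc) (addL_eq0 (etrans (addLC c b) bc)).
- by move=> ad; rewrite (addL_eq0 ad) (addL_eq0 (etrans (addLC d a) ad)).
- by move=> ->.
Qed.

Lemma swapp_normal p : normal_pair p -> normal_pair (swapp p).
Proof. by case; [right | left]. Qed.

Local Notation K := (diff_ring HM absv01).
Implicit Types k l : K.

HB.instance Definition _ := gen_eqMixin K.
HB.instance Definition _ := gen_choiceMixin K.

Definition toK p : K := exist _ (normp p) (normp_normal p).
Definition inK x : K := toK (x, O).
Definition addK k l : K := toK (addp (sval k) (sval l)).
Definition mulK k l : K := toK (mulp (sval k) (sval l)).
Definition oppK k : K := exist _ (swapp (sval k)) (swapp_normal (svalP k)).

Lemma K_eqvp k l : eqvp (sval k) (sval l) -> k = l.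
Proof.
case: k l => [p np] [q nq] /= /(normal_eqvp_eq np nq) pq; subst q.
by congr exist; apply: Prop_irrelevance.
Qed.

(* normp p is equivalent to p and the operations on pairs respect eqvp, so every law
   reduces to a semiring identity in M. *)
Ltac diff_ring_law :=
  move=> *; apply: K_eqvp; rewrite /= ?normp_eqvp /eqvp /addp /mulp /swapp /=; ring.

Lemma addKA : associative addK. Proof. diff_ring_law. Qed.
Lemma addKC : commutative addK. Proof. diff_ring_law. Qed.
Lemma add0K : left_id (inK O) addK. Proof. diff_ring_law. Qed.
Lemma addNK : left_inverse (inK O) oppK addK. Proof. diff_ring_law. Qed.
Lemma mulKA : associative mulK. Proof. diff_ring_law. Qed.
Lemma mulKC : commutative mulK. Proof. diff_ring_law. Qed.
Lemma mul1K : left_id (inK I) mulK. Proof. diff_ring_law. Qed.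
Lemma mulKDl : left_distributive mulK addK. Proof. diff_ring_law. Qed.

Lemma val_inK x : sval (inK x) = (x, O).
Proof. by apply: normal_eqvp_eq; [apply: normp_normal | right | apply: normp_eqvp]. Qed.

Lemma inK_inj : injective inK.
Proof. by move=> x y /(congr1 sval); rewrite !val_inK => -[]. Qed.

Lemma inK1_neq0 : inK I != inK O.
Proof. by apply/eqP => /inK_inj; apply: oneL_neq0. Qed.

HB.instance Definition _ := GRing.isZmodule.Build K addKA addKC add0K addNK.
HB.instance Definition _ :=
  GRing.Zmodule_isComNzRing.Build K mulKA mulKC mul1K mulKDl inK1_neq0.

Lemma inK0 : inK O = 0. Proof. by []. Qed.
Lemma inK1 : inK I = 1. Proof. by []. Qed.
Lemma inKD x y : inK (x ⊕ y) = inK x + inK y. Proof. diff_ring_law. Qed.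
Lemma inKM x y : inK (x ⊛ y) = inK x * inK y. Proof. diff_ring_law. Qed.

Lemma inK_eq0 x : inK x = 0 -> x = O.
Proof. by rewrite -inK0 => /inK_inj. Qed.

Lemma val_oppK k : sval (- k) = swapp (sval k). Proof. by []. Qed.

Lemma inK_or_oppK k : exists a, k = inK a \/ k = - inK a.
Proof.
case: k => [[a b] ab]; case: ab => /= [a0|b0]; subst.
- by exists b; right; apply: K_eqvp; rewrite val_oppK val_inK; apply: eqvp_refl.
- by exists a; left; apply: K_eqvp; rewrite val_inK; apply: eqvp_refl.
Qed.

Lemma mulK_eq0 k l : k * l = 0 -> (k == 0) || (l == 0).
Proof.
have [a [->|->]] := inK_or_oppK k; have [b [->|->]] := inK_or_oppK l;
  rewrite ?mulNr ?mulrN ?opprK -inKM => /eqP; rewrite ?oppr_eq0 => /eqP;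
  by move=> /inK_eq0 /mulL_eq0 [] ->; rewrite inK0 ?oppr0 eqxx ?orbT.
Qed.

(* idomainType asks for a unit ring structure; inverses are chosen classically. *)
Definition unitK : {pred K} := fun k => `[< exists l, l * k = 1 >].
Definition invK k : K :=
  if pselect (exists l, l * k = 1) is left ex then sval (cid ex) else k.

Lemma mulVK : {in unitK, left_inverse 1 invK *%R}.
Proof.
move=> k /asboolP kunit; rewrite /invK; case: pselect => // ex.
exact: svalP (cid ex).
Qed.

Lemma unitKPl k l : l * k = 1 -> unitK k.
Proof. by move=> lk; apply/asboolP; exists l. Qed.

Lemma invK_out : {in [predC unitK], invK =1 id}.
Proof. by move=> k /asboolP kunit; rewrite /invK; case: pselect. Qed.

HB.instance Definition _ := GRing.ComNzRing_hasMulInverse.Build K mulVK unitKPl invK_out.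
HB.instance Definition _ := GRing.ComUnitRing_isIntegral.Build K mulK_eq0.

Definition leK k l : bool := `[< (sval (l - k)).2 = O >].
Definition ltK k l : bool := (l != k) && leK k l.
Definition normK k : K := inK ((sval k).1 ⊕ (sval k).2).

Lemma le0K k : leK 0 k <-> exists a, k = inK a.
Proof.
rewrite /leK subr0; split => [/asboolP | [a ->]]; last by apply/asboolP; rewrite val_inK.
case: k => [[a b] ab] /= b0; subst; exists a.
by apply: K_eqvp; rewrite val_inK; apply: eqvp_refl.
Qed.

Lemma le0K_add k l : leK 0 k -> leK 0 l -> leK 0 (k + l).
Proof. by move=> /le0K[a ->] /le0K[b ->]; apply/le0K; exists (a ⊕ b); rewrite inKD. Qed.

Lemma le0K_mul k l : leK 0 k -> leK 0 l -> leK 0 (k * l).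
Proof. by move=> /le0K[a ->] /le0K[b ->]; apply/le0K; exists (a ⊛ b); rewrite inKM. Qed.

Lemma le0K_anti k : leK 0 k -> leK k 0 -> k = 0.
Proof. by move=> /le0K[a ->] /asboolP; rewrite sub0r val_oppK val_inK /= => ->. Qed.

Lemma subK_ge0 k l : leK 0 (l - k) = leK k l.
Proof. by rewrite /leK subr0. Qed.

Lemma le0K_total k : leK 0 k || leK k 0.
Proof.
have [a [->|->]] := inK_or_oppK k; apply/orP; [left | right]; first by apply/le0K; exists a.
by rewrite -subK_ge0 sub0r opprK; apply/le0K; exists a.
Qed.

Lemma normK_opp k : normK (- k) = normK k.
Proof. by rewrite /normK val_oppK addLC. Qed.

Lemma normK_ge0 k : leK 0 k -> normK k = k.
Proof. by move=> /le0K[a ->]; rewrite /normK val_inK addL0. Qed.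

Lemma ltK_def k l : ltK k l = (l != k) && leK k l. Proof. by []. Qed.

HB.instance Definition _ := Num.IntegralDomain_isLeReal.Build K le0K_add le0K_mul
  le0K_anti subK_ge0 le0K_total normK_opp normK_ge0 ltK_def.

Lemma inK_ge0 x : 0 <= inK x. Proof. by apply/le0K; exists x. Qed.

Lemma inK_le x y : leM x y -> inK x <= inK y.
Proof.
move=> xy; rewrite -subr_ge0 -(addL_subK xy) inKD addrC addKr; exact: inK_ge0.
Qed.

Lemma absv01_PAminus : model_PAminus M.
Proof.
split; first by move=> x y; apply: dist_discrete.
have no_between := total_no_between01 leL_total.
exists K, inK; do 9?split.
- exact: inK_inj.
- by move=> r /le0K[a ->]; exists a.
- exact: inK_ge0.
- by move=> x y; rewrite inKD.
- by move=> x y; rewrite inKM.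
- move=> x y; case: (leL_total x y) => xy.
  + by rewrite xy min_l // inK_le.
  + by rewrite meetLC xy min_r // inK_le.
- move=> x y; case: (leL_total x y) => xy.
  + by rewrite max_r ?inK_le // -{1}xy joinLC meetLC meetLKU.
  + by rewrite max_l ?inK_le // -{1}xy meetLC meetLKU.
move=> r /[dup] r_gt0 /ltW /le0K [a ra]; rewrite ra -inK1 in r_gt0 *.
have [aI|Ia] := leL_total a I; last exact: inK_le.
have [->|a_neqI] := pselect (a = I); first by [].
case: no_between; exists a; do !split => //; first exact: le0L.
by move=> a0; rewrite -a0 inK0 ltxx in r_gt0.
Qed.

End Dichotomy.
End AA0Models.

Lemma PAminus_total (M : LStruct) : model_PAminus M -> forall x y : M, leM x y \/ leM y x.
Proof.
move=> [_ [K [f [f_inj [_ [_ [_ [_ [_ [_ [f_meet _]]]]]]]]]]] x y.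
have [fxy|/ltW fyx] := leP (f x) (f y); [left | right];
  by apply: f_inj; rewrite f_meet ?min_l ?min_r.
Qed.

Theorem mainTheorem2 (M : LStruct) (HM : model_AA0 M) :
  let i   := forall x y : M, leM x y \/ leM y x in
  let ii  := ~ (exists x : M, ltM (zeroL M) x /\ ltM x (oneL M)) in
  let iii := forall x : M, x = zeroL M \/ absv x = 1 in
  let iv  := model_PAminus M in
  [/\ (i <-> ii), (ii <-> iii) & (iii <-> iv)].
Proof.
have i_ii := total_no_between01 HM; have ii_iii := no_between01_absv01 HM.
have iii_i := leL_total HM; have iii_iv := absv01_PAminus HM.
split; split => [|h].
- exact: i_ii.
- exact/iii_i/ii_iii.
- exact: ii_iii.
- exact/i_ii/iii_i.
- exact: iii_iv.
- exact/ii_iii/i_ii/PAminus_total.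
Qed.
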